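(* If $G$ is a graph with $n$ vertices and $m$ edges and $\vec{G}$ is any orientation of $G$, then $$Mo(G)\geq nm-2\sum_{(v,u)\in E(\vec{G})}\bar{n}_G(v,u).$$
   Context: All graphs are finite and simple. For a graph $G$ and an edge $uv$ of $G$, $n_G(u,v)$ denotes the number of vertices of $G$ whose distance in $G$ to $u$ is smaller than their distance to $v$, and $\bar{n}_G(v,u)=n-n_G(u,v)$, i.e. the number of vertices whose distance to $v$ is at most their distance to $u$. The Mostar index of $G$ is $Mo(G)=\sum_{uv\in E(G)}|n_G(u,v)-n_G(v,u)|$. An orientation $\vec{G}$ replaces each edge $uv$ by exactly one of the arcs $(u,v)$, $(v,u)$. *)

From mathcomp Require Import all_boot all_order all_algebra.
Set Implicit Arguments. Unset Strict Implicit. Unset Printing Implicit Defensive.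

Definition simple_graph (T : finType) (e : rel T) : Prop :=
  symmetric e /\ irreflexive e.

Definition has_walk (T : finType) (e : rel T) (k : nat) (x y : T) : bool :=
  [exists p : k.-tuple T, path e x p && (last x p == y)].

(* graph distance; None = infinite (different components).
   A shortest walk is a path, hence of length < #|T|. *)
Definition gdist (T : finType) (e : rel T) (x y : T) : option nat :=
  ohead [seq k <- iota 0 #|T| | has_walk e k x y].

Definition dlt (a b : option nat) : bool :=
  match a, b with
  | Some i, Some j => i < j
  | Some _, None => true
  | None, _ => false
  end.

Definition nG (T : finType) (e : rel T) (u v : T) : nat :=
  #|[set w | dlt (gdist e w u) (gdist e w v)]|.

Definition nbarG (T : finType) (e : rel T) (v u : T) : nat :=
  #|T| - nG e u v.

(* each unordered edge counted once via the ordering given by enum_rank *)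
Definition edge_once (T : finType) (e : rel T) (p : T * T) : bool :=
  e p.1 p.2 && (enum_rank p.1 < enum_rank p.2).

Definition nedges (T : finType) (e : rel T) : nat :=
  #|[set p : T * T | edge_once e p]|.

Definition mostar (T : finType) (e : rel T) : nat :=
  \sum_(p : T * T | edge_once e p) absz (Posz (nG e p.1 p.2) - Posz (nG e p.2 p.1))%R.

Definition orientation (T : finType) (e : rel T) (o : rel T) : Prop :=
  (forall u v, o u v -> e u v) /\ (forall u v, e u v -> (o u v (+) o v u)).

(** Since no vertex is strictly closer to [u] than to [v] and strictly closer
    to [v] than to [u], [n_G(u,v) + n_G(v,u) <= n]; hence for every arc
    [(v,u)] the term [n - 2 nbar_G(v,u) = 2 n_G(u,v) - n] is at most
    [n_G(u,v) - n_G(v,u) <= |n_G(u,v) - n_G(v,u)|].  An orientation picks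
    exactly one arc per edge, so summing over the arcs is summing over the
    edges, which gives the bound. *)

From mathcomp Require Import all_boot all_order all_algebra.
From mathcomp Require Import zify.
Import GRing.Theory Num.Theory.
Set Implicit Arguments. Unset Strict Implicit.

Lemma nG_add_le_card (T : finType) (e : rel T) (u v : T) :
  nG e u v + nG e v u <= #|T|.
Proof.
rewrite /nG -cardsUI.
have -> : [set w | dlt (gdist e w u) (gdist e w v)]
          :&: [set w | dlt (gdist e w v) (gdist e w u)] = set0.
  apply/setP=> w; rewrite !inE.
  by case: (gdist e w u) => [i|]; case: (gdist e w v) => [j|] //=; lia.
by rewrite cards0 addn0 max_card.
Qed.

Lemma card_sub_double_nbarG_le (T : finType) (e : rel T) (u v : T) :
  (#|T|%:Z - 2%:Z * (nbarG e u v)%:Z <= `|(nG e u v)%:Z - (nG e v u)%:Z|)%R.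
Proof.
have nG_le := nG_add_le_card e u v.
rewrite distrC; apply: Order.POrderTheory.le_trans (ler_norm _).
rewrite /nbarG -subzn; last by lia.
by move: (nG e u v) (nG e v u) #|T| nG_le => a b n; lia.
Qed.

Section Orientation.

Variables (T : finType) (e o : rel T).
Hypotheses (e_sym : symmetric e) (e_irr : irreflexive e).
Hypotheses (o_sub : forall u v, o u v -> e u v)
           (o_xor : forall u v, e u v -> o u v (+) o v u).

Lemma arc_rev_not_arc (u v : T) : o u v -> ~~ o v u.
Proof. by move=> ouv; have := o_xor (o_sub ouv); rewrite ouv. Qed.

Lemma arc_rank_neq (u v : T) : o u v -> enum_rank u != enum_rank v.
Proof.
move=> ouv; apply: contraTneq (o_sub ouv) => /enum_rank_inj ->.
by rewrite e_irr.
Qed.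

Lemma edge_once_arcE (u v : T) :
  edge_once e (u, v) && o u v = o u v && (enum_rank u < enum_rank v).
Proof.
by rewrite /edge_once /=; case ouv: (o u v); rewrite ?andbF ?andbT // o_sub.
Qed.

Lemma edge_once_revarcE (u v : T) :
  edge_once e (u, v) && ~~ o u v = o v u && ~~ (enum_rank v < enum_rank u).
Proof.
rewrite /edge_once /= -leqNgt.
case ovu: (o v u); last first.
  case euv: (e u v) => //=.
  by have := o_xor euv; rewrite ovu addbF => ->; rewrite andbF.
have euv : e u v by rewrite e_sym o_sub.
rewrite euv (negbTE (arc_rev_not_arc ovu)) andbT ltn_neqAle.
by rewrite eq_sym (arc_rank_neq ovu).
Qed.

(** Arcs [(u,v)] with [rank u < rank v] are the edges already pointing forward;
    the others are, after swapping, the edges pointing backward. *)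
Lemma big_arc_edge_once (R : Type) (idx : R) (op : Monoid.com_law idx)
    (F : T * T -> R) :
  \big[op/idx]_(p | o p.1 p.2) F p =
  \big[op/idx]_(p | edge_once e p)
     (if o p.1 p.2 then F p else F (swap_pair p)).
Proof.
rewrite (bigID (fun p => enum_rank p.1 < enum_rank p.2)) /=.
rewrite [RHS](bigID (fun p => o p.1 p.2)) /=.
congr (op _ _).
  apply: eq_big => [[u v]|[u v] /andP[/= -> _]] //.
  by rewrite edge_once_arcE.
rewrite (reindex_inj (can_inj swap_pairK)) /=.
apply: eq_big => [[u v]|[u v] /andP[/= /arc_rev_not_arc/negbTE -> _]] //.
by rewrite edge_once_revarcE.
Qed.

End Orientation.

Theorem lemma1 (T : finType) (e : rel T) (o : rel T) :
  simple_graph e -> orientation e o ->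
  ((#|T| * nedges e)%:Z - 2%:Z * (\sum_(p : T * T | o p.1 p.2) nbarG e p.1 p.2)%:Z
     <= (mostar e)%:Z)%R.
Proof.
move=> [e_sym e_irr] [o_sub o_xor].
rewrite (big_arc_edge_once e_sym e_irr o_sub o_xor) /nedges /mostar.
rewrite cardsE -sum1_card big_distrr /=.
rewrite !(big_morph Posz PoszD (erefl _)) mulr_sumr -sumrB.
apply: ler_sum => -[u v] _ /=; rewrite muln1 abszE.
case: (o u v) => /=; first exact: card_sub_double_nbarG_le.
by rewrite distrC; apply: card_sub_double_nbarG_le.
Qed.
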